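(* Let $m=n=1$, $\boldsymbol s\in\{(1,-1),(-1,1)\}$, $\tilde{\boldsymbol s}=(s_2,s_1)$, $\boldsymbol z$ $h$-generic, let $y$ be a polynomial representing a solution of the BAE associated to $\boldsymbol s,\boldsymbol\lambda,\boldsymbol z,l$ and $\tilde y$ the polynomial with $y\,\tilde y[-s_1]=\varphi^{\boldsymbol s}-\psi^{\boldsymbol s}$. Define \[\mathcal R^{\boldsymbol s}(y)=\Big(1-\frac{T_1^{\boldsymbol s}y[s_1]}{T_1^{\boldsymbol s}[s_1]y}\tau\Big)^{s_1}\Big(1-\frac{T_2^{\boldsymbol s}y[-s_2]}{T_2^{\boldsymbol s}[s_2]y}\tau\Big)^{s_2},\] and $\mathcal R^{\tilde{\boldsymbol s}}(\tilde y)$ by the same formula with $\boldsymbol s,y,T^{\boldsymbol s}$ replaced by $\tilde{\boldsymbol s},\tilde y,T^{\tilde{\boldsymbol s}}$. If $\boldsymbol\lambda$ is typical, then $\mathcal R^{\boldsymbol s}(y)$ is a $(1|1)$-rational difference operator and $\mathcal R^{\boldsymbol s}(y)=\mathcal R^{\tilde{\boldsymbol s}}(\tilde y)$.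
   Context: Fix $h\in\mathbb{C}^\times$. $\mathbb{K}=\mathbb{C}(x)$, $f[i](x)=f(x-ih)$; $\mathbb{K}[\tau]$ difference operators with $\tau f=f[1]\tau$; $\mathbb{K}(\tau)$ its division ring of fractions. A fractional factorization $\mathcal R=\mathcal D_{\bar0}\mathcal D_{\bar1}^{-1}$ ($\mathcal D_{\bar0},\mathcal D_{\bar1}\in\mathbb{K}[\tau]$) is minimal if $\mathcal D_{\bar1}$ is monic of minimal order; $\mathcal R$ is a $(1|1)$-rational difference operator if in its minimal fractional factorization $\mathcal D_{\bar0},\mathcal D_{\bar1}$ are completely factorable over $\mathbb{K}$ (products of the leading coefficient and factors $\tau-g$, $g\in\mathbb{K}$), both have order $1$, and they have the same nonzero constant term. Polynomial $\mathfrak{gl}_{1|1}$ weights $\lambda^{(k)}$, $k=1,\dots,p$; their weights with respect to $\boldsymbol s$ (eigenvalues of $e_{\sigma(1)\sigma(1)},e_{\sigma(2)\sigma(2)}$ on the $\boldsymbol s$-highest weight vector, $\sigma$ the identity for $\boldsymbol s=(1,-1)$ and the transposition otherwise) are $(a_k,b_k)\in\mathbb{Z}^2_{\ge0}$ with $b_k=0$ if $a_k=0$; $\boldsymbol\lambda$ typical iff $a_k+b_k\ne0$ for some $k$. $\tilde a_k=b_k+1$, $\tilde b_k=a_k-1$ if $a_k+b_k\ne0$, else $\tilde a_k=\tilde b_k=0$. $\boldsymbol z$ $h$-generic. $T_1^{\boldsymbol s}=\prod_k\prod_{j=1}^{a_k}(x-z_k+s_1jh)$, $T_2^{\boldsymbol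 s}=\prod_k\prod_{j=1}^{b_k}(x-z_k+s_2jh)$, $T_1^{\tilde{\boldsymbol s}}=\prod_k\prod_{j=1}^{\tilde a_k}(x-z_k+\tilde s_1jh)$, $T_2^{\tilde{\boldsymbol s}}=\prod_k\prod_{j=1}^{\tilde b_k}(x-z_k+\tilde s_2jh)$. $\varphi^{\boldsymbol s}=\prod_{k:a_k+b_k\ne0}(x-z_k+s_1a_kh)$, $\psi^{\boldsymbol s}=\prod_{k:a_k+b_k\ne0}(x-z_k+s_2b_kh)$. BAE: $\prod_{k:a_k+b_k\ne0}\frac{t_j-z_k+s_1a_kh}{t_j-z_k+s_2b_kh}=1$, $j=1,\dots,l$, a root of multiplicity $r$ appearing at most $r$ times among the $t_j$; $y=\prod_j(x-t_j)$ represents the solution. *)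

From HB Require Import structures.
From mathcomp Require Import all_boot all_order all_algebra.
Set Implicit Arguments. Unset Strict Implicit. Unset Printing Implicit Defensive.
Import Order.TTheory GRing.Theory Num.Theory.
Local Open Scope ring_scope.

(* K = C(x) is {fraction {poly C}}; pfrac p is the image of a polynomial in K. *)
Definition pfrac (C : idomainType) (p : {poly C}) : {fraction {poly C}} :=
  @FracField.tofrac {poly C} p.

(* f[i](x) = f(x - i h), for polynomials *)
Definition shiftp (C : idomainType) (h : C) (i : int) (p : {poly C}) : {poly C} :=
  p \Po ('X - (i%:~R * h)%:P).

Definition h_generic (C : idomainType) (h : C) (p : nat) (z : 'I_p -> C) : Prop :=
  forall i j : 'I_p, i != j -> forall n : int, z i - z j != n%:~R * h.

Definition typical (p : nat) (a b : 'I_p -> nat) : Prop :=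
  exists k, (a k + b k != 0)%N.

Definition Tpoly (C : idomainType) (h : C) (p : nat) (z : 'I_p -> C)
  (c : int) (n : 'I_p -> nat) : {poly C} :=
  \prod_(k < p) \prod_(1 <= j < (n k).+1) ('X - (z k - c%:~R * j%:R * h)%:P).

Definition a_tilde (p : nat) (a b : 'I_p -> nat) (k : 'I_p) : nat :=
  if (a k + b k != 0)%N then (b k).+1 else 0%N.
Definition b_tilde (p : nat) (a b : 'I_p -> nat) (k : 'I_p) : nat :=
  if (a k + b k != 0)%N then (a k).-1 else 0%N.

(* phi^s (with c = s1, n = a) and psi^s (with c = s2, n = b) *)
Definition phipsi (C : idomainType) (h : C) (p : nat) (z : 'I_p -> C)
  (a b : 'I_p -> nat) (c : int) (n : 'I_p -> nat) : {poly C} :=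
  \prod_(k < p | (a k + b k != 0)%N) ('X - (z k - c%:~R * (n k)%:R * h)%:P).

Definition BAE_eq (C : fieldType) (h : C) (p : nat) (z : 'I_p -> C)
  (a b : 'I_p -> nat) (s1 s2 : int) (t0 : C) : Prop :=
  \prod_(k < p | (a k + b k != 0)%N)
     ((t0 - z k + s1%:~R * (a k)%:R * h) / (t0 - z k + s2%:~R * (b k)%:R * h)) = 1.

(* the tuple t = (t_1,...,t_l) is a solution of the BAE: each t_j solves the
   equation, and a root of multiplicity r (as a root of phi - psi, i.e. of the
   equation cleared of denominators) appears at most r times *)
Definition BAE_solution (C : fieldType) (h : C) (p : nat) (z : 'I_p -> C)
  (a b : 'I_p -> nat) (s1 s2 : int) (t : seq C) : Prop :=
  forall t0, t0 \in t ->
    BAE_eq h z a b s1 s2 t0 /\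
    (count_mem t0 t <= mup t0 (phipsi h z a b s1 a - phipsi h z a b s2 b))%N.

(* Evaluation of a difference operator sum_i P_i tau^i (coefficients on the
   left) inside a division ring D containing K[tau] *)
Definition opev (K D : nzRingType) (iota : K -> D) (tau : D) (P : {poly K}) : D :=
  \sum_(i < size P) iota P`_i * tau ^+ i.

Section Ops.
Variables (C : idomainType) (D : unitRingType).
Variables (iota : {fraction {poly C}} -> D) (tau : D).

Definition completely_factorable (P : {poly {fraction {poly C}}}) : Prop :=
  exists (c : {fraction {poly C}}) (gs : seq {fraction {poly C}}),
    opev iota tau P = iota c * \prod_(g <- gs) (tau - iota g).

Definition frac_fact (R : D) (D0 D1 : {poly {fraction {poly C}}}) : Prop :=
  D1 != 0 /\ R = opev iota tau D0 * (opev iota tau D1)^-1.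

Definition min_frac_fact (R : D) (D0 D1 : {poly {fraction {poly C}}}) : Prop :=
  [/\ frac_fact R D0 D1, D1 \is monic &
      forall E0 E1, frac_fact R E0 E1 -> E1 \is monic -> (size D1 <= size E1)%N].

Definition rational11 (R : D) : Prop :=
  exists D0 D1, min_frac_fact R D0 D1 /\
    completely_factorable D0 /\ completely_factorable D1 /\
    size D0 = 2%N /\ size D1 = 2%N /\ D0`_0 = D1`_0 /\ D1`_0 != 0.

Definition Rop (h : C) (s1 s2 : int) (T1 T2 Y : {poly C}) : D :=
  (1 - iota (pfrac (T1 * shiftp h s1 Y) / pfrac (shiftp h s1 T1 * Y)) * tau) ^ s1 *
  (1 - iota (pfrac (T2 * shiftp h (- s2) Y) / pfrac (shiftp h s2 T2 * Y)) * tau) ^ s2.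
End Ops.

From Pilot Require Import Defs.
From HB Require Import structures.
From mathcomp Require Import all_boot all_order all_algebra.
From mathcomp Require Import ring.
Set Implicit Arguments. Unset Strict Implicit. Unset Printing Implicit Defensive.
Import Order.TTheory GRing.Theory Num.Theory.
Local Open Scope ring_scope.

(* Put Z = prod_(k typical) (x - z_k).  Each product T telescopes against Z,
   e.g. T_1^s Z = phi^s T_1^s[s_1], so the four coefficients of R^s(y) and of
   R^s~(y~) are A = phi y[s]/(Z y), B = psi y[s]/(Z y), A~ = psi[s] y~[-s]/(Z y~)
   and B~ = phi[s] y~[-s]/(Z y~).  From y y~[-s] = phi - psi one gets
   A + A~ = B + B~, and the degree-two coefficients of (1 - A~ tau)(1 - A tau)
   and (1 - B~ tau)(1 - B tau) agree because shifts commute; this product identity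
   is the equality of the two operators.  Finally, for 0 != x != beta,
   1 - beta tau = (tau + e) e^-1 with e = -1/beta[-1], so
   (1 - x tau)(1 - beta tau)^-1 = (e + (x/beta) tau)(tau + e)^-1, and this
   denominator is minimal since a polynomial numerator would force x = beta.
   Genericity of z and typicality give phi != psi, hence A != B. *)

Section Shift.
Variables (C : idomainType) (h : C).

HB.instance Definition _ i :=
  GRing.RMorphism.copy (shiftp h i) (comp_poly ('X - (i%:~R * h)%:P)).

Lemma shiftpXC i c : shiftp h i ('X - c%:P) = 'X - (i%:~R * h + c)%:P.
Proof. by rewrite /shiftp comp_polyB comp_polyX comp_polyC polyCD opprD addrA. Qed.

Lemma shiftpD i j (q : {poly C}) : shiftp h i (shiftp h j q) = shiftp h (i + j) q.
Proof.
rewrite /shiftp -comp_polyA comp_polyB comp_polyX comp_polyC.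
by rewrite intrD mulrDl polyCD opprD addrA.
Qed.

Lemma shiftp0 (q : {poly C}) : shiftp h 0 q = q.
Proof. by rewrite /shiftp mul0r subr0 comp_polyXr. Qed.

Lemma shiftpK i : cancel (shiftp h i) (shiftp h (- i)).
Proof. by move=> q; rewrite shiftpD addNr shiftp0. Qed.

Lemma shiftpNK i : cancel (shiftp h (- i)) (shiftp h i).
Proof. by move=> q; rewrite shiftpD subrr shiftp0. Qed.

Lemma shiftp_inj i : injective (shiftp h i).
Proof. exact: can_inj (shiftpK i). Qed.

Lemma shiftp_eq0 i (q : {poly C}) : (shiftp h i q == 0) = (q == 0).
Proof. exact: raddf_eq0 (@shiftp_inj i). Qed.

End Shift.

HB.instance Definition _ (C : idomainType) :=
  GRing.RMorphism.copy (@pfrac C) (@tofrac _).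

Lemma pfrac_eq0 (C : idomainType) (q : {poly C}) : (pfrac q == 0) = (q == 0).
Proof. exact: tofrac_eq0. Qed.

Section Telescoping.
Variables (C : idomainType) (h : C) (p : nat) (z : 'I_p -> C).

Lemma prod_XsubC_telescope (c : int) (z0 : C) (n : nat) :
  let T := \prod_(1 <= j < n.+1) ('X - (z0 - c%:~R * j%:R * h)%:P) in
  T * ('X - z0%:P) = ('X - (z0 - c%:~R * n%:R * h)%:P) * shiftp h c T.
Proof.
elim: n => [|n IH] /=; first by rewrite big_geq // rmorph1 mul1r mulr1 mulr0 mul0r subr0.
rewrite big_nat_recr //= rmorphM /= mulrAC IH shiftpXC.
have -> : c%:~R * h + (z0 - c%:~R * n.+1%:R * h) = z0 - c%:~R * n%:R * h.
  by rewrite -natr1; ring.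
ring.
Qed.

Lemma Tpoly_telescope (c : int) (n : 'I_p -> nat) (S : pred 'I_p) :
  (forall k, ~~ S k -> n k = 0%N) ->
  Tpoly h z c n * \prod_(k | S k) ('X - (z k)%:P) =
  \prod_(k | S k) ('X - (z k - c%:~R * (n k)%:R * h)%:P) * shiftp h c (Tpoly h z c n).
Proof.
move=> n0.
have -> : Tpoly h z c n =
    \prod_(k | S k) \prod_(1 <= j < (n k).+1) ('X - (z k - c%:~R * j%:R * h)%:P).
  rewrite /Tpoly [RHS]big_mkcond /=; apply: eq_bigr => k _.
  by case: ifP => // /negbT /n0 ->; rewrite big_geq.
rewrite rmorph_prod -!big_split /=; apply: eq_bigr => k _.
exact: prod_XsubC_telescope.
Qed.

End Telescoping.

Definition zpoly (C : idomainType) (p : nat) (z : 'I_p -> C) (a b : 'I_p -> nat) :=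
  \prod_(k < p | (a k + b k != 0)%N) ('X - (z k)%:P).

Section BetheTelescoping.
Variables (C : idomainType) (h : C) (p : nat) (z : 'I_p -> C).
Variables (a b : 'I_p -> nat) (s : int).

Local Notation Z := (zpoly z a b).
Local Notation phi := (phipsi h z a b s a).
Local Notation psi := (phipsi h z a b (- s) b).

Lemma Tpoly1_zpoly : Tpoly h z s a * Z = phi * shiftp h s (Tpoly h z s a).
Proof. by apply: Tpoly_telescope => k; rewrite negbK addn_eq0 => /andP[/eqP]. Qed.

Lemma Tpoly2_zpoly :
  Tpoly h z (- s) b * Z = psi * shiftp h (- s) (Tpoly h z (- s) b).
Proof. by apply: Tpoly_telescope => k; rewrite negbK addn_eq0 => /andP[_ /eqP]. Qed.

Lemma Tpoly1t_zpoly :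
  Tpoly h z (- s) (a_tilde a b) * Z =
  shiftp h s psi * shiftp h (- s) (Tpoly h z (- s) (a_tilde a b)).
Proof.
rewrite Tpoly_telescope => [|k /negbTE]; last by rewrite /a_tilde => ->.
congr (_ * _); rewrite rmorph_prod; apply: eq_bigr => k typ_k /=.
by rewrite shiftpXC /a_tilde typ_k -natr1 intrN; congr ('X - _%:P); ring.
Qed.

Hypothesis b0_of_a0 : forall k, a k = 0%N -> b k = 0%N.

Lemma Tpoly2t_zpoly :
  Tpoly h z s (b_tilde a b) * Z =
  shiftp h s phi * shiftp h s (Tpoly h z s (b_tilde a b)).
Proof.
rewrite Tpoly_telescope => [|k /negbTE]; last by rewrite /b_tilde => ->.
congr (_ * _); rewrite rmorph_prod; apply: eq_bigr => k typ_k /=.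
rewrite shiftpXC /b_tilde typ_k; congr ('X - _%:P).
have : (0 < a k)%N by rewrite lt0n; apply: contraNneq typ_k => a0; rewrite a0 b0_of_a0.
by case: (a k) => // n _ /=; rewrite -natr1; ring.
Qed.

End BetheTelescoping.

Lemma zpoly_monic (C : idomainType) p (z : 'I_p -> C) a b : zpoly z a b \is monic.
Proof. exact: monic_prod_XsubC. Qed.

Lemma phipsi_monic (C : idomainType) (h : C) p (z : 'I_p -> C) a b c n :
  phipsi h z a b c n \is monic.
Proof. exact: monic_prod_XsubC. Qed.

Lemma Tpoly_monic (C : idomainType) (h : C) p (z : 'I_p -> C) c n : Tpoly h z c n \is monic.
Proof. by apply: monic_prod => k _; apply: monic_prod_XsubC. Qed.

Lemma phipsi_neq (C : numDomainType) (h : C) p (z : 'I_p -> C) a b (s : int) :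
  s != 0 -> h != 0 -> h_generic h z -> typical a b ->
  phipsi h z a b s a != phipsi h z a b (- s) b.
Proof.
move=> s0 h0 z_gen [k0 typ_k0]; rewrite -subr_eq0; apply/eqP.
pose r := z k0 - s%:~R * (a k0)%:R * h.
move/(congr1 (horner^~ r)); rewrite hornerD hornerN horner0 /phipsi !horner_prod.
rewrite (bigD1 k0) //= hornerXsubC subrr mul0r add0r => /eqP.
rewrite oppr_eq0 prodf_seq_eq0 => /hasP[k _ /andP[typ_k]]; apply/negP.
rewrite hornerXsubC /r intrN; have [<-|k0_neq_k] := eqVneq k0 k.
  have -> : z k0 - s%:~R * (a k0)%:R * h - (z k0 - - s%:~R * (b k0)%:R * h) =
            - (s%:~R * (a k0 + b k0)%:R * h) by rewrite natrD; ring.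
  by rewrite oppr_eq0 !mulf_neq0 ?intr_eq0 ?pnatr_eq0.
have -> : z k0 - s%:~R * (a k0)%:R * h - (z k - - s%:~R * (b k)%:R * h) =
          z k0 - z k - (s * (a k0 + b k)%:Z)%:~R * h by rewrite intrM -pmulrn natrD; ring.
by rewrite subr_eq0 z_gen.
Qed.

Lemma pfrac_div_eq (C : idomainType) (N M N' M' : {poly C}) :
  M != 0 -> M' != 0 -> N * M' = N' * M -> pfrac N / pfrac M = pfrac N' / pfrac M'.
Proof. by move=> M0 M'0 E; apply/eqP; rewrite eqr_div ?pfrac_eq0 // -!rmorphM E. Qed.

Lemma pfrac_div_neq0 (C : idomainType) (N M : {poly C}) :
  N != 0 -> M != 0 -> pfrac N / pfrac M != 0.
Proof. by move=> N0 M0; rewrite mulf_neq0 ?invr_eq0 ?pfrac_eq0. Qed.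

Lemma eq_pfrac_div2r (C : idomainType) (N N' M : {poly C}) :
  M != 0 -> (pfrac N / pfrac M == pfrac N' / pfrac M) = (N == N').
Proof.
move=> M0; rewrite eqr_div ?pfrac_eq0 // -!rmorphM /pfrac tofrac_eq.
by rewrite (inj_eq (mulIf M0)).
Qed.

Lemma Tpoly_ratio (C : idomainType) (h : C) (T Z f : {poly C}) (c d : int) (Y : {poly C}) :
  T * Z = f * shiftp h c T -> T != 0 -> Z != 0 -> Y != 0 ->
  pfrac (T * shiftp h d Y) / pfrac (shiftp h c T * Y) =
  pfrac (f * shiftp h d Y) / pfrac (Z * Y).
Proof.
move=> TZ T0 Z0 Y0; apply: pfrac_div_eq; rewrite ?mulf_neq0 ?shiftp_eq0 //.
by rewrite mulrACA TZ; ring.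
Qed.

Lemma one_sub_tau_swap (F D : nzRingType) (iota : {rmorphism F -> D}) (tau : D)
    (x x' y y' x1 y1 : F) :
  tau * iota x = iota x1 * tau -> tau * iota y = iota y1 * tau ->
  x + x' = y + y' -> x' * x1 = y' * y1 ->
  (1 - iota x' * tau) * (1 - iota x * tau) = (1 - iota y' * tau) * (1 - iota y * tau).
Proof.
have expand u v v1 : tau * iota v = iota v1 * tau ->
    (1 - iota u * tau) * (1 - iota v * tau) =
    1 - iota (v + u) * tau + iota (u * v1) * tau ^+ 2.
  move=> tau_v; rewrite mulrBl mul1r mulrBr mulr1 -mulrA (mulrA tau) tau_v.
  by rewrite rmorphD rmorphM expr2 !mulrA mulrDl !opprD opprK !addrA.
by move=> /expand-> /expand-> -> ->.
Qed.

Lemma mulr_swap_div (R : unitRingType) (u v u' v' : R) :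
  u' \is a GRing.unit -> v \is a GRing.unit -> u' * u = v' * v -> u / v = u'^-1 * v'.
Proof. by move=> u'U vU E; rewrite -[u](mulKr u'U) E -mulrA mulrK. Qed.

Lemma coefMXaddC0 (R : nzRingType) (p : {poly R}) c : (p * 'X + c%:P)`_0 = c.
Proof. by rewrite -cons_poly_def coef_cons. Qed.

Lemma coefMXaddCS (R : nzRingType) (p : {poly R}) c i : (p * 'X + c%:P)`_i.+1 = p`_i.
Proof. by rewrite -cons_poly_def coef_cons. Qed.

Lemma size_CMXaddC (R : nzRingType) (c e : R) : (size (c%:P * 'X + e%:P)%R <= 2)%N.
Proof. by rewrite size_MXaddC; case: ifP; rewrite ?ltnS ?size_polyC_leq1. Qed.

Section DifferenceOperators.
Variables (C : idomainType) (h : C) (D : unitRingType).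
Variables (iota : {rmorphism {fraction {poly C}} -> D}) (tau : D).

Local Notation K := {fraction {poly C}}.
Local Notation opev := (opev iota tau).

Lemma opev_widen n (P : {poly K}) :
  (size P <= n)%N -> opev P = \sum_(i < n) iota P`_i * tau ^+ i.
Proof.
move=> le_Pn; rewrite /Defs.opev (big_ord_widen n (fun i => iota P`_i * tau ^+ i) le_Pn).
rewrite big_mkcond; apply: eq_bigr => i _; case: ltnP => // le_P_i.
by rewrite nth_default // rmorph0 mul0r.
Qed.

Lemma opev_is_zmod_morphism : zmod_morphism opev.
Proof.
move=> P Q; pose n := maxn (size P) (size Q).
rewrite !(@opev_widen n) ?leq_maxl ?leq_maxr //; last first.
  by rewrite (leq_trans (size_add _ _)) // size_polyN.
by rewrite -sumrB; apply: eq_bigr => i _; rewrite coefB rmorphB mulrBl.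
Qed.

HB.instance Definition _ := GRing.isZmodMorphism.Build _ _ opev opev_is_zmod_morphism.

Lemma opevC c : opev c%:P = iota c.
Proof.
by rewrite (@opev_widen 1) ?size_polyC_leq1 // big_ord1 coefC expr0 mulr1.
Qed.

Lemma opev_MXaddC c e : opev (c%:P * 'X + e%:P) = iota e + iota c * tau.
Proof.
rewrite (@opev_widen 2) ?size_CMXaddC // !big_ord_recl big_ord0.
by rewrite coefMXaddC0 coefMXaddCS coefC expr0 mulr1 expr1 addr0.
Qed.

Lemma opev_XaddC e : opev ('X + e%:P) = tau + iota e.
Proof. by rewrite -['X]mul1r -polyC1 opev_MXaddC rmorph1 mul1r addrC. Qed.

Local Notation op u := (1 - iota u * tau).

Hypothesis opev_eq0 : forall P, opev P = 0 -> P = 0.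

Lemma opev_inj : injective opev.
Proof. exact: raddf_inj opev_eq0. Qed.

Lemma one_sub_tau_neq0 x : op x != 0.
Proof.
have <- : opev ((- x)%:P * 'X + 1%:P) = op x by rewrite opev_MXaddC rmorph1 rmorphN mulNr.
apply/eqP => /opev_eq0/(congr1 (coefp 0)).
by rewrite /= coefMXaddC0 coef0 => /eqP; rewrite oner_eq0.
Qed.

Hypothesis tau_pfrac : forall q, tau * iota (pfrac q) = iota (pfrac (shiftp h 1 q)) * tau.

Lemma tau_pfrac_div N M :
  tau * iota (pfrac N / pfrac M) = iota (pfrac (shiftp h 1 N) / pfrac (shiftp h 1 M)) * tau.
Proof.
have [->|M0] := eqVneq M 0; first by rewrite !rmorph0 invr0 !mulr0 rmorph0 mulr0 mul0r.
have unit_M c : iota (pfrac (shiftp h c M)) \is a GRing.unit.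
  by rewrite fmorph_unit pfrac_eq0 shiftp_eq0.
have unit_M0 := unit_M 0; rewrite shiftp0 in unit_M0.
rewrite !rmorphM !fmorphV mulrA tau_pfrac -!mulrA; congr (_ * _).
rewrite -[in RHS](mulrK unit_M0 tau) tau_pfrac !mulrA mulVr ?mul1r //.
Qed.

Lemma tauX_pfrac_div n N M :
  tau ^+ n * iota (pfrac N / pfrac M) =
  iota (pfrac (shiftp h n N) / pfrac (shiftp h n M)) * tau ^+ n.
Proof.
elim: n => [|n IH]; first by rewrite !expr0 mul1r mulr1 !shiftp0.
by rewrite exprS -mulrA IH mulrA tau_pfrac_div -mulrA -exprS !shiftpD -intS.
Qed.

Lemma opev_mulr_XaddC (P : {poly K}) N M :
  opev P * (tau + iota (pfrac N / pfrac M)) =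
  opev (P * 'X + \poly_(i < size P) (P`_i * (pfrac (shiftp h i N) / pfrac (shiftp h i M)))).
Proof.
rewrite raddfD /= mulrDr; congr (_ + _).
  rewrite (@opev_widen (size P).+1 (P * 'X)); last first.
    by rewrite (leq_trans (size_mul_leq _ _)) // size_polyX addn2.
  rewrite big_ord_recl coefMX /= rmorph0 mul0r add0r /Defs.opev mulr_suml.
  by apply: eq_bigr => i _; rewrite coefMX /= exprSr mulrA.
rewrite (@opev_widen (size P) _ (size_poly _ _)) /Defs.opev mulr_suml.
by apply: eq_bigr => i _; rewrite coef_poly ltn_ord -mulrA tauX_pfrac_div mulrA -rmorphM.
Qed.

Lemma opev_mulr_XaddC_eq1 (P : {poly K}) c N M :
  let e := pfrac N / pfrac M in e != 0 ->
  opev P * (tau + iota e) = opev (c%:P * 'X + e%:P) -> c = 1.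
Proof.
move=> e e0; rewrite opev_mulr_XaddC => /opev_inj.
set Q := \poly_(i < size P) _ => PXQ.
have coefQ i : Q`_i = P`_i * (pfrac (shiftp h i N) / pfrac (shiftp h i M)).
  by rewrite coef_poly; case: ltnP => // le_P_i; rewrite nth_default ?mul0r.
have P0 : P`_0 = 1.
  apply: (mulIf e0); move/(congr1 (coefp 0)): PXQ.
  by rewrite /= coefMXaddC0 coefD coefMX add0r coefQ !shiftp0 mul1r.
have P_neq0 : P != 0 by apply: contra_eq_neq P0 => ->; rewrite coef0 eq_sym oner_neq0.
have : ((size P).+1 <= 2)%N.
  rewrite -(size_mulX P_neq0) -(size_polyDl (p := P * 'X) (q := Q)) ?PXQ ?size_CMXaddC //.
  by rewrite size_mulX // ltnS size_poly.
rewrite ltnS => size_P; move/(congr1 (coefp 1)): PXQ.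
rewrite /= coefMXaddCS coefD coefMX coefQ P0 coefC /=.
by rewrite nth_default // mul0r addr0 => <-.
Qed.

Hypothesis units : forall d : D, d != 0 -> d \is a GRing.unit.

Lemma rational11_one_sub_tau_div x N M :
  let beta := pfrac N / pfrac M in
  N != 0 -> M != 0 -> x != 0 -> x != beta -> rational11 iota tau (op x / op beta).
Proof.
move=> beta N0 M0 x0 x_neq_beta.
have beta0 : beta != 0 := pfrac_div_neq0 N0 M0.
pose e := pfrac (- shiftp h (-1) M) / pfrac (shiftp h (-1) N).
have e0 : e != 0 by rewrite pfrac_div_neq0 ?oppr_eq0 ?shiftp_eq0.
pose c := x / beta.
have c0 : c != 0 := mulf_neq0 x0 (invr_neq0 beta0).
have tau_e : tau * iota e = - iota beta^-1 * tau.
  by rewrite tau_pfrac_div rmorphN /= !shiftpNK rmorphN mulNr rmorphN /beta invf_div.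
have tau_einv : tau * iota e^-1 = - (iota beta * tau).
  by rewrite invf_div tau_pfrac_div rmorphN /= !shiftpNK rmorphN invrN mulrN rmorphN mulNr.
have op_beta : op beta = (tau + iota e) * iota e^-1.
  by rewrite mulrDl tau_einv -rmorphM (divff e0) rmorph1 addrC.
have D1_neq0 : 'X + e%:P != 0 by rewrite -size_poly_eq0 size_XaddC.
have unit_D1 : tau + iota e \is a GRing.unit.
  by apply: units; rewrite -opev_XaddC; apply: contra_neq D1_neq0 => /opev_eq0.
have unit_einv : iota e^-1 \is a GRing.unit by rewrite fmorph_unit (invr_neq0 e0).
have R_eq : op x / op beta = opev (c%:P * 'X + e%:P) / opev ('X + e%:P).
  rewrite op_beta invrM // -fmorphV invrK mulrA opev_MXaddC opev_XaddC; congr (_ / _).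
  by rewrite mulrBl mul1r -mulrA tau_e mulNr mulrN opprK mulrA -rmorphM.
have size_D0 : size (c%:P * 'X + e%:P) = 2%N.
  by rewrite size_MXaddC polyC_eq0 (negbTE c0) size_polyC c0.
have D1_coef0 : ('X + e%:P)`_0 = e by rewrite coefD coefX coefC add0r.
exists (c%:P * 'X + e%:P), ('X + e%:P); split; [|split; [|split]].
- split; [by split | exact: monicXaddC |].
  move=> E0 E1 [_ R_E] monic_E1; rewrite size_XaddC leqNgt; apply/negP => size_E1.
  have E1_1 : E1 = 1.
    move: monic_E1; rewrite (size1_polyC size_E1) monicE lead_coefC => /eqP->.
    exact: polyC1.
  rewrite E1_1 -polyC1 opevC rmorph1 invr1 mulr1 in R_E.
  have c1 : c = 1.
    apply: (opev_mulr_XaddC_eq1 (P := E0) e0).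
    by rewrite -R_E R_eq opev_XaddC divrK.
  by move: x_neq_beta; rewrite (divr1_eq c1) eqxx.
- exists c, [:: - (e / c)].
  by rewrite big_seq1 opev_MXaddC rmorphN opprK mulrDr -rmorphM mulrC (divfK c0) addrC.
- by exists 1, [:: - e]; rewrite big_seq1 opev_XaddC rmorphN opprK rmorph1 mul1r.
- rewrite size_D0 size_XaddC coefMXaddC0 D1_coef0.
  by split; [|split; [|split; [|exact: e0]]].
Qed.

Lemma rational11_swap Nx Mx Ny My x' y' :
  let x := pfrac Nx / pfrac Mx in let y := pfrac Ny / pfrac My in
  Nx != 0 -> Mx != 0 -> Ny != 0 -> My != 0 -> x != y -> x + x' = y + y' ->
  x' * (pfrac (shiftp h 1 Nx) / pfrac (shiftp h 1 Mx)) =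
    y' * (pfrac (shiftp h 1 Ny) / pfrac (shiftp h 1 My)) ->
  rational11 iota tau (op x / op y) /\ op x / op y = (op x')^-1 * op y'.
Proof.
move=> x y Nx0 Mx0 Ny0 My0 x_neq_y sum_eq prod_eq; split.
  exact: rational11_one_sub_tau_div Ny0 My0 (pfrac_div_neq0 Nx0 Mx0) x_neq_y.
apply: mulr_swap_div; [exact/units/one_sub_tau_neq0 | exact/units/one_sub_tau_neq0 |].
exact: one_sub_tau_swap (tau_pfrac_div _ _) (tau_pfrac_div _ _) sum_eq prod_eq.
Qed.

Lemma rational11_swap_inv Nx Mx Ny My x' y' :
  let x := pfrac Nx / pfrac Mx in let y := pfrac Ny / pfrac My in
  Nx != 0 -> Mx != 0 -> Ny != 0 -> My != 0 -> x != y -> x + x' = y + y' ->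
  x' * (pfrac (shiftp h 1 Nx) / pfrac (shiftp h 1 Mx)) =
    y' * (pfrac (shiftp h 1 Ny) / pfrac (shiftp h 1 My)) ->
  rational11 iota tau ((op x')^-1 * op y') /\ (op x')^-1 * op y' = op x / op y.
Proof.
move=> x y Nx0 Mx0 Ny0 My0 x_neq_y sum_eq prod_eq.
by have [rat_xy <-] := rational11_swap Nx0 Mx0 Ny0 My0 x_neq_y sum_eq prod_eq.
Qed.

End DifferenceOperators.

Section BetheOperators.
Variables (C : idomainType) (h : C) (D : unitRingType).
Variables (iota : {rmorphism {fraction {poly C}} -> D}) (tau : D).
Hypothesis units : forall d : D, d != 0 -> d \is a GRing.unit.
Hypothesis tau_pfrac : forall q, tau * iota (pfrac q) = iota (pfrac (shiftp h 1 q)) * tau.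
Hypothesis opev_eq0 : forall P, opev iota tau P = 0 -> P = 0.

Variables (s : int) (phi psi Z y yt : {poly C}).
Hypotheses (phi0 : phi != 0) (psi0 : psi != 0) (Z0 : Z != 0) (y0 : y != 0) (yt0 : yt != 0).
Hypothesis phi_neq_psi : phi != psi.
Hypothesis y_yt : y * shiftp h (- s) yt = phi - psi.

Local Notation op u := (1 - iota u * tau).
Local Notation A := (pfrac (phi * shiftp h s y) / pfrac (Z * y)).
Local Notation B := (pfrac (psi * shiftp h s y) / pfrac (Z * y)).
Local Notation At := (pfrac (shiftp h s psi * shiftp h (- s) yt) / pfrac (Z * yt)).
Local Notation Bt := (pfrac (shiftp h s phi * shiftp h (- s) yt) / pfrac (Z * yt)).

Lemma ratios_add_swap : A + At = B + Bt.
Proof.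
pose W := pfrac (shiftp h s y * shiftp h (- s) yt) / pfrac Z.
have AB : A - B = W.
  rewrite -mulrBl -rmorphB -mulrBl -y_yt; apply: pfrac_div_eq (mulf_neq0 Z0 y0) Z0 _.
  by ring.
have BtAt : Bt - At = W.
  rewrite -mulrBl -rmorphB -mulrBl -rmorphB -y_yt (rmorphM (shiftp h s)) /= shiftpNK.
  by apply: pfrac_div_eq (mulf_neq0 Z0 yt0) Z0 _; ring.
by rewrite -(subrK B A) -(subrK At Bt) AB BtAt; ring.
Qed.

Lemma rational11_Rop_swap : s = 1 \/ s = -1 ->
  rational11 iota tau (op A ^ s * op B ^ (- s)) /\
  op A ^ s * op B ^ (- s) = op At ^ (- s) * op Bt ^ s.
Proof.
have ys0 i : shiftp h i y != 0 by rewrite shiftp_eq0.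
have Zy0 := mulf_neq0 Z0 y0; have Zyt0 := mulf_neq0 Z0 yt0.
move=> s_unit; have sum_eq := ratios_add_swap.
have sum_t : At + A = Bt + B by rewrite addrC sum_eq addrC.
case: s_unit sum_eq sum_t => -> sum_eq sum_t; rewrite ?opprK in sum_eq sum_t *.
rewrite !expr1z !exprN1.
- apply: (rational11_swap opev_eq0 tau_pfrac units (mulf_neq0 phi0 (ys0 1)) Zy0
                           (mulf_neq0 psi0 (ys0 1)) Zy0 _ sum_eq).
    by rewrite (eq_pfrac_div2r _ _ Zy0) (inj_eq (mulIf (ys0 1))).
  rewrite !mulf_div; congr (_ / _); rewrite -!rmorphM; congr pfrac.
  by rewrite !rmorphM /=; ring.
- have yts0 i : shiftp h i yt != 0 by rewrite shiftp_eq0.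
  have sh0 q i : q != 0 -> shiftp h i q != 0 by rewrite shiftp_eq0.
  apply: (rational11_swap_inv opev_eq0 tau_pfrac units
    (mulf_neq0 (sh0 _ (-1) psi0) (yts0 1)) Zyt0 (mulf_neq0 (sh0 _ (-1) phi0) (yts0 1)) Zyt0
    _ sum_t).
    rewrite (eq_pfrac_div2r _ _ Zyt0) (inj_eq (mulIf (yts0 1))).
    by rewrite (inj_eq (@shiftp_inj _ h _)) eq_sym.
  rewrite !mulf_div; congr (_ / _); rewrite -!rmorphM; congr pfrac.
  by rewrite !rmorphM /= !shiftpNK; ring.
Qed.

End BetheOperators.

Theorem lemma4p5 (C : numClosedFieldType) (h : C) (p : nat) (z : 'I_p -> C)
  (a b : 'I_p -> nat) (s1 : int) (t : seq C) (y yt : {poly C})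
  (D : unitRingType) (iota : {rmorphism {fraction {poly C}} -> D}) (tau : D) :
  (* D is a division ring containing K[tau] = C(x)[tau] *)
  (forall d : D, d != 0 -> d \is a GRing.unit) ->
  (forall q : {poly C}, tau * iota (pfrac q) = iota (pfrac (shiftp h 1 q)) * tau) ->
  (forall P : {poly {fraction {poly C}}}, opev iota tau P = 0 -> P = 0) ->
  (* data *)
  h != 0 ->
  (s1 = 1 \/ s1 = -1) ->
  (forall k, a k = 0%N -> b k = 0%N) ->
  h_generic h z ->
  BAE_solution h z a b s1 (- s1) t ->
  y = \prod_(t0 <- t) ('X - t0%:P) ->
  y * shiftp h (- s1) yt = phipsi h z a b s1 a - phipsi h z a b (- s1) b ->
  typical a b ->
  let R := Rop iota tau h s1 (- s1) (Tpoly h z s1 a) (Tpoly h z (- s1) b) y in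
  rational11 iota tau R /\
  R = Rop iota tau h (- s1) s1 (Tpoly h z (- s1) (a_tilde a b))
                               (Tpoly h z s1 (b_tilde a b)) yt.
Proof.
move=> units tau_pfrac opev_eq0 h0 s1_unit b0_of_a0 z_gen _ y_def y_yt typ R.
have s1_neq0 : s1 != 0 by case: s1_unit => ->.
have phi_neq_psi := phipsi_neq s1_neq0 h0 z_gen typ.
have y0 : y != 0 by rewrite y_def monic_neq0 ?monic_prod_XsubC.
have yt0 : yt != 0.
  apply: contra_neq phi_neq_psi => yt0.
  by apply/eqP; rewrite -subr_eq0 -y_yt yt0 rmorph0 mulr0.
have Z0 := monic_neq0 (zpoly_monic z a b).
have T0 c n := monic_neq0 (Tpoly_monic h z c n).
have phipsi0 c n := monic_neq0 (phipsi_monic h z a b c n).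
rewrite /R /Rop opprK.
rewrite (Tpoly_ratio _ (Tpoly1_zpoly h z a b s1) (T0 _ _) Z0 y0).
rewrite (Tpoly_ratio _ (Tpoly2_zpoly h z a b s1) (T0 _ _) Z0 y0).
rewrite (Tpoly_ratio _ (Tpoly1t_zpoly h z a b s1) (T0 _ _) Z0 yt0).
rewrite (Tpoly_ratio _ (Tpoly2t_zpoly h z s1 b0_of_a0) (T0 _ _) Z0 yt0).
exact (rational11_Rop_swap units tau_pfrac opev_eq0 (phipsi0 _ _) (phipsi0 _ _)
  Z0 y0 yt0 phi_neq_psi y_yt s1_unit).
Qed.
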